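(* Under any CLC choice model, for every seller $i\in\mathcal N$ and price $p_i$, the revenue $R_i(p_i,\mathbf p_{-i})$ is non-decreasing in $\mathbf p_{-i}$: if $\mathbf p'_{-i}\ge\mathbf p_{-i}$ componentwise, then $R_i(p_i,\mathbf p'_{-i})\ge R_i(p_i,\mathbf p_{-i})$.
   Context: CLC setup. There are $N$ sellers $\mathcal N=\{1,\dots,N\}$, each selling one item, and a unit mass of customers, each buying at most one item. Items have a price attribute (indexed $0$) and $K$ non-price attributes indexed by $\mathcal A=\{1,\dots,K\}$; $\bar{\mathcal A}=\{0\}\cup\mathcal A$. Non-price attribute $k$ takes values in an arbitrary set $\mathcal V^k$; prices lie in $\mathcal V=[0,\bar v]$ for a fixed $\bar v>0$. Seller $i$'s item has fixed non-price attribute values $v_i^k\in\mathcal V^k$ and price $p_i\in\mathcal V$ chosen by seller $i$; $\mathbf p=(p_1,\dots,p_N)$, and $v_i^0:=p_i$. Each customer $c$ has: a strict total order $\succ_c$ on $\bar{\mathcal A}$ (attribute importance); for each attribute $k$ a complete transitive weak preference $\succsim_c^k$ on its value set, with strict part $\succ_c^k$ and indifference $\sim_c^k$ (and $v\sim_c^k v$), where for price $p\succ_c^0p'$ iff $p<p'$ and $p\sim_c^0p'$ iff $p=p'$; a willingness-to-pay $w_c\in[0,\bar v]$; a set $\mathcal C_c\subseteq\mathcal V^1\times\cdots\times\mathcal V^K$ of admissible non-price attribute vectors; and a strict tie-breaking order over sellers. Customer $c$ lexicographically prefers item $i$ to item $j$ if there is an attribute $k$ with $v_i^{k'}\sim_c^{k'}v_j^{k'}$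 for all $k'\succ_c k$ and $v_i^k\succ_c^k v_j^k$; if no such $k$ exists, the tie-breaking order decides. Under the Consider-then-Choose with Lexicographic Choice (CLC) model, customer $c$ forms the consideration set $\mathcal N_c=\{i\in\mathcal N: p_i\le w_c,\ (v_i^1,\dots,v_i^K)\in\mathcal C_c\}$, buys nothing if it is empty, and otherwise buys the top-ranked item of $\mathcal N_c$ under this lexicographic order (with tie-breaking). An instance of CLC choice is a joint distribution $\mathcal G$ of these customer primitives; the conditional distribution of $w_c$ given the other primitives is assumed to have a Lipschitz continuous density. $D_i(\mathbf p)$ is the probability a customer buys from seller $i$ and $R_i(\mathbf p)=p_iD_i(\mathbf p)$ is seller $i$'s revenue, also written $R_i(p_i,\mathbf p_{-i})$. *)

From HB Require Import structures.
From mathcomp Require Import all_boot all_order all_algebra all_fingroup.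
From mathcomp Require Import all_classical all_reals all_analysis.
Set Implicit Arguments. Unset Strict Implicit. Unset Printing Implicit Defensive.
Import Order.TTheory GRing.Theory Num.Theory.
Local Open Scope ring_scope.
Local Open Scope classical_set_scope.

(* Sellers: 'I_N.  Non-price attributes: 'I_K with value sets Vk k.
   Full attribute set {0} U {1..K}: 'I_K.+1, index 0 = price,
   index (lift ord0 k) = non-price attribute k. *)

Section CLC.
Variables (R : realType) (N K : nat) (Vk : 'I_K -> Type) (T : Type).

Record CLCprims := {
  imp : T -> 'I_K.+1 -> 'I_K.+1 -> Prop;           (* imp t a b : a more important than b *)
  pref : T -> forall k : 'I_K, Vk k -> Vk k -> Prop;
  wtp : T -> R;                                     (* willingness to pay *)
  adm : T -> (forall k : 'I_K, Vk k) -> Prop;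
  tb : T -> 'I_N -> 'I_N -> Prop                    (* tb t i j : i ranked before j *)
}.

Definition strict_total_order (X : Type) (r : X -> X -> Prop) :=
  [/\ forall x, ~ r x x,
      forall x y z, r x y -> r y z -> r x z &
      forall x y, x <> y -> r x y \/ r y x].

Definition weak_order (X : Type) (r : X -> X -> Prop) :=
  (forall x y, r x y \/ r y x) /\ (forall x y z, r x y -> r y z -> r x z).

Definition CLC_wf (vbar : R) (G : CLCprims) :=
  forall t : T,
  [/\ strict_total_order (imp G t),
      forall k, weak_order (@pref G t k),
      0 <= wtp G t <= vbar &
      strict_total_order (tb G t)].

Variable G : CLCprims.
(* fixed non-price attributes of the sellers' items *)
Variable vals : 'I_N -> forall k : 'I_K, Vk k.

Definition attr_weak (t : T) (p : 'I_N -> R) (a : 'I_K.+1) (i j : 'I_N) : Prop :=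
  match unlift ord0 a with
  | None => p i <= p j
  | Some k => @pref G t k (vals i k) (vals j k)
  end.

Definition attr_strict t p a i j := attr_weak t p a i j /\ ~ attr_weak t p a j i.
Definition attr_indiff t p a i j := attr_weak t p a i j /\ attr_weak t p a j i.

Definition lex_pref (t : T) (p : 'I_N -> R) (i j : 'I_N) : Prop :=
  (exists a, (forall a', imp G t a' a -> attr_indiff t p a' i j)
             /\ attr_strict t p a i j)
  \/ ((forall a, attr_indiff t p a i j) /\ tb G t i j).

Definition considered (t : T) (p : 'I_N -> R) (i : 'I_N) : Prop :=
  p i <= wtp G t /\ adm G t (vals i).

Definition buys (t : T) (p : 'I_N -> R) (i : 'I_N) : Prop :=
  considered t p i /\ forall j, j <> i -> considered t p j -> lex_pref t p i j.

End CLC.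

Definition valid_prices (R : realType) (N : nat) (vbar : R) (p : 'I_N -> R) :=
  forall j, 0 <= p j <= vbar.

Definition demand (R : realType) (N K : nat) (Vk : 'I_K -> Type)
  (d : measure_display) (T : measurableType d) (P : probability T R)
  (G : CLCprims R N Vk T) (vals : 'I_N -> forall k : 'I_K, Vk k)
  (i : 'I_N) (p : 'I_N -> R) : R :=
  fine (P [set t | buys G vals t p i]).

Definition revenue (R : realType) (N K : nat) (Vk : 'I_K -> Type)
  (d : measure_display) (T : measurableType d) (P : probability T R)
  (G : CLCprims R N Vk T) (vals : 'I_N -> forall k : 'I_K, Vk k)
  (i : 'I_N) (p : 'I_N -> R) : R :=
  p i * demand P G vals i p.

(* A customer who buys from i at p still buys from i at p'.  Her consideration
   set can only lose rivals, since i's price is unchanged and the others only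
   rose; and against each remaining rival j, raising p_j improves i's standing
   on the price attribute while leaving every other attribute untouched.
   Lexicographic comparison is monotone under such attribute-wise improvement:
   the attribute that decided in favour of i at p either still decides, or
   some more important attribute now breaks the tie in favour of i.  So the
   buyers of i at p form a subset of the buyers at p', and with p_i fixed the
   revenue grows by monotonicity of the measure. *)

From Stdlib Require Import Wellfounded.Inclusion Wf_nat.
From HB Require Import structures.
From mathcomp Require Import all_boot all_order all_algebra all_fingroup.
From mathcomp Require Import all_classical all_reals all_analysis.
Import Order.TTheory GRing.Theory Num.Theory.
Local Open Scope ring_scope.
Local Open Scope classical_set_scope.

Lemma wf_finite_strict_order (A : finType) (r : A -> A -> Prop) :
  (forall x, ~ r x x) -> (forall x y z, r x y -> r y z -> r x z) ->
  well_founded r.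
Proof.
move=> irr tr; pose rank x := #|[pred y | `[< r y x >]]|.
apply: (wf_incl _ _ (ltof _ rank)); last exact: well_founded_ltof.
move=> x y rxy; rewrite /ltof; apply/ssrnat.ltP; apply: proper_card.
apply/properP; split.
  by apply/fintype.subsetP => z; rewrite !inE => rzx; exact: tr rzx rxy.
by exists x; rewrite !inE //; apply/asboolP; exact: irr.
Qed.

Section LexicographicImprovement.
Context {R : realType} {N K : nat} {Vk : 'I_K -> Type} {T : Type}.
Context {G : CLCprims R N Vk T} {vals : 'I_N -> forall k : 'I_K, Vk k}.
Context {t : T} {p p' : 'I_N -> R} {i j : 'I_N}.
Hypothesis imp_order : strict_total_order (imp G t).
Hypothesis improve_ij :
  forall a, attr_weak G vals t p a i j -> attr_weak G vals t p' a i j.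
Hypothesis improve_ji :
  forall a, attr_weak G vals t p' a j i -> attr_weak G vals t p a j i.

Let imp_wf : well_founded (imp G t).
Proof. by case: imp_order => irr tr _; exact: wf_finite_strict_order. Qed.

Lemma attr_indiff_improve {a} :
  attr_indiff G vals t p a i j -> attr_weak G vals t p' a i j.
Proof. by case=> /improve_ij. Qed.

(* Within an upward-closed set of attributes on which i is weakly preferred,
   climb to a most important attribute where i and j are not indifferent. *)
Lemma exists_deciding_attr (U : 'I_K.+1 -> Prop) :
  (forall b c, U b -> imp G t c b -> U c) ->
  (forall c, U c -> attr_weak G vals t p' c i j) ->
  forall b, U b -> ~ attr_indiff G vals t p' b i j ->
  exists a, (forall a', imp G t a' a -> attr_indiff G vals t p' a' i j)
            /\ attr_strict G vals t p' a i j.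
Proof.
move=> Uup Uweak; elim/(well_founded_ind imp_wf) => b IH Ub not_indiff.
have [decides|] :=
  pselect (forall c, imp G t c b -> attr_indiff G vals t p' c i j).
  have wij := Uweak b Ub.
  by exists b; split=> //; split=> // wji; apply: not_indiff.
by move=> /existsNP[c /not_implyP[cb]]; apply: IH (Uup _ _ Ub cb).
Qed.

Lemma lex_pref_improve : lex_pref G vals t p i j -> lex_pref G vals t p' i j.
Proof.
case: imp_order => _ tr _.
case=> [[a [above_indiff [wij not_wji]]]|[all_indiff tb_ij]].
  left; apply: (exists_deciding_attr (fun c => c = a \/ imp G t c a) _ _ a).
  - by move=> b c [->|ba] cb; right=> //; exact: tr ba.
  - move=> c [->|ca]; first exact: improve_ij.
    exact/attr_indiff_improve/above_indiff.
  - by left.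
  - by case=> _ /improve_ji.
have [|/existsNP[b not_indiff]] :=
  pselect (forall a, attr_indiff G vals t p' a i j); first by right.
left; apply: (exists_deciding_attr (fun=> True) _ _ b) => // c _.
exact/attr_indiff_improve.
Qed.

End LexicographicImprovement.

Section RaiseRivalPrices.
Context {R : realType} {N K : nat} {Vk : 'I_K -> Type} {T : Type}.
Context {G : CLCprims R N Vk T} {vals : 'I_N -> forall k : 'I_K, Vk k}.
Context {i : 'I_N} {p p' : 'I_N -> R}.
Hypothesis same_own_price : p' i = p i.
Hypothesis raise_rivals : forall j, j <> i -> p j <= p' j.

Lemma attr_weak_raise_rivals_ij t a j : j <> i ->
  attr_weak G vals t p a i j -> attr_weak G vals t p' a i j.
Proof.
move=> ji; rewrite /attr_weak; case: unliftP => [k _|_] //.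
by rewrite same_own_price => /le_trans; apply; exact: raise_rivals.
Qed.

Lemma attr_weak_raise_rivals_ji t a j : j <> i ->
  attr_weak G vals t p' a j i -> attr_weak G vals t p a j i.
Proof.
move=> ji; rewrite /attr_weak; case: unliftP => [k _|_] //.
by rewrite same_own_price; apply: le_trans; exact: raise_rivals.
Qed.

Lemma buys_raise_rivals t : strict_total_order (imp G t) ->
  buys G vals t p i -> buys G vals t p' i.
Proof.
move=> imp_order [[own_wtp own_adm] best].
split; first by split; rewrite ?same_own_price.
move=> j ji [rival_wtp rival_adm].
apply: (lex_pref_improve imp_order).
- by move=> a; exact: attr_weak_raise_rivals_ij.
- by move=> a; exact: attr_weak_raise_rivals_ji.
- apply: (best j ji); split=> //.
  exact: le_trans (raise_rivals j ji) rival_wtp.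
Qed.

End RaiseRivalPrices.

Theorem propositionB1 (R : realType) (N K : nat) (Vk : 'I_K -> Type)
  (d : measure_display) (T : measurableType d) (P : probability T R)
  (vbar : R) (hvbar : 0 < vbar)
  (G : CLCprims R N Vk T) (hG : CLC_wf vbar G)
  (vals : 'I_N -> forall k : 'I_K, Vk k)
  (hmeas : forall (q : 'I_N -> R) (j : 'I_N), valid_prices vbar q ->
             measurable [set t | buys G vals t q j])
  (i : 'I_N) (p p' : 'I_N -> R)
  (hp : valid_prices vbar p) (hp' : valid_prices vbar p')
  (hi : p' i = p i)
  (hle : forall j, j <> i -> p j <= p' j) :
  revenue P G vals i p <= revenue P G vals i p'.
Proof.
rewrite /revenue /demand hi; apply: ler_wpM2l; first by case/andP: (hp i).
have buys_p := hmeas p i hp; have buys_p' := hmeas p' i hp'.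
apply: fine_le; try exact: fin_num_measure.
apply: le_measure; rewrite ?inE // => t /=.
by apply: (buys_raise_rivals hi hle); case: (hG t).
Qed.
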